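(* For every $n \in \mathbb{N}$, \[ g(n) \le \tau_3(n) \le \tfrac{9}{2}\, g(n). \]
   Context: A colouring of $E(K_n)$ is almost Gallai (almost $3$-Gallai) if no two rainbow triangles share an edge, where a triangle is rainbow if its three edges have pairwise distinct colours. $\tau_3(n)$ is the maximum number of rainbow triangles in an almost Gallai colouring $c: E(K_n) \to \mathbb{N}$ (any number of colours), and $g(n)$ is the maximum number of rainbow triangles in an almost Gallai colouring $c : E(K_n) \to \{R,B,G\}$ using at most three colours. *)

From mathcomp Require Import all_boot.
Set Implicit Arguments. Unset Strict Implicit. Unset Printing Implicit Defensive.

(* An edge colouring of K_n with colours in C: a symmetric function on pairs
   of vertices of 'I_n (its values on the diagonal are irrelevant). *)
Definition sym_colouring (n : nat) (C : Type) (c : 'I_n -> 'I_n -> C) : Prop :=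
  forall x y : 'I_n, c x y = c y x.

(* A triangle T (a 3-subset of vertices) is rainbow under c if its three edges
   have pairwise distinct colours. *)
Definition rainbow (n : nat) (C : eqType) (c : 'I_n -> 'I_n -> C)
  (T : {set 'I_n}) : bool :=
  (#|T| == 3) &&
  [forall x in T, forall y in T, forall z in T, forall w in T,
     [&& x != y, z != w & [set x; y] != [set z; w]] ==> (c x y != c z w)].

Definition rainbow_triangles (n : nat) (C : eqType) (c : 'I_n -> 'I_n -> C)
  : {set {set 'I_n}} := [set T | rainbow c T].

(* almost Gallai: no two (distinct) rainbow triangles share an edge,
   i.e. two distinct rainbow triangles share at most one vertex. *)
Definition almost_gallai (n : nat) (C : eqType) (c : 'I_n -> 'I_n -> C) : bool :=
  [forall T1 in rainbow_triangles c, forall T2 in rainbow_triangles c,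
     (T1 != T2) ==> (#|T1 :&: T2| <= 1)].

Definition is_max_rainbow (C : eqType) (n k : nat) : Prop :=
  (exists c : 'I_n -> 'I_n -> C,
      sym_colouring c /\ almost_gallai c /\ #|rainbow_triangles c| = k) /\
  (forall c : 'I_n -> 'I_n -> C,
      sym_colouring c -> almost_gallai c -> #|rainbow_triangles c| <= k).

(* tau_3(n) = t : colours in N (any number of colours). *)
Definition is_tau3 (n t : nat) : Prop := is_max_rainbow nat n t.

(* g(n) = g : colours in a 3-element set {R,B,G} (here 'I_3). *)
Definition is_g (n g : nat) : Prop := is_max_rainbow (ordinal 3) n g.

(* g(n) <= tau_3(n) because a colouring with colours R, B, G is a colouring in N.
   Conversely, let c be an almost Gallai colouring in N with tau_3(n) rainbow
   triangles, and recolour it by phi o c for a uniformly random map phi from the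
   finitely many colours of c to {R, B, G}.  Recolouring creates no new rainbow
   triangle, so phi o c is almost Gallai and has at most g(n) of them.  A rainbow
   triangle of c stays rainbow iff phi is injective on its three colours, which
   happens for 3!/3^3 = 2/9 of all phi; averaging gives 2/9 tau_3(n) <= g(n). *)

From mathcomp Require Import all_boot zify.
From Stdlib Require Import Classical.
Set Implicit Arguments. Unset Strict Implicit. Unset Printing Implicit Defensive.

Definition distinct3 (T : eqType) (t : T * T * T) : bool :=
  [&& t.1.1 != t.1.2, t.1.2 != t.2 & t.1.1 != t.2].

Lemma cards3 (T : finType) (x y z : T) :
  x != y -> y != z -> x != z -> #|[set x; y; z]| = 3.
Proof. by move=> xy yz xz; rewrite -setUA cardsU1 cards2 !inE negb_or xy xz yz. Qed.

Lemma cards3P (T : finType) (A : {set T}) :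
  #|A| = 3 -> exists x y z, [/\ x != y, y != z, x != z & A = [set x; y; z]].
Proof.
move=> A3; have /card_gt2P[x [y [z [[xA yA zA] [xy yz zx]]]]] : 2 < #|A| by rewrite A3.
exists x, y, z; rewrite eq_sym in zx; split=> //; apply/eqP.
rewrite eq_sym eqEcard cards3 // A3 leqnn andbT.
by apply/subsetP => w; rewrite !inE -orbA => /or3P[] /eqP->.
Qed.

Section Rainbow.
Variables (n : nat) (C : eqType) (c : 'I_n -> 'I_n -> C).
Lemma rainbow_card3 (T : {set 'I_n}) : rainbow c T -> #|T| = 3.
Proof. by case/andP=> /eqP. Qed.

Hypothesis c_sym : sym_colouring c.

Lemma rainbow3E (x y z : 'I_n) : x != y -> y != z -> x != z ->
  rainbow c [set x; y; z] = distinct3 (c x y, c y z, c x z).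
Proof.
move=> xy yz xz; rewrite /rainbow cards3 // eqxx /=; apply/idP/idP.
- move=> /forall_inP rainbowT.
  have {}rainbowT a b e f : a \in [set x; y; z] -> b \in [set x; y; z] ->
      e \in [set x; y; z] -> f \in [set x; y; z] ->
      a != b -> e != f -> [set a; b] != [set e; f] -> c a b != c e f.
    move=> aT bT eT fT ab ef abef.
    move: (rainbowT a aT) => /forall_inP/(_ b bT)/forall_inP/(_ e eT).
    by move=> /forall_inP/(_ f fT)/implyP; apply; rewrite ab ef abef.
  have edgesD a b e f : (a \notin [set e; f]) || (b \notin [set e; f]) ->
      [set a; b] != [set e; f].
    by apply: contraTneq => <-; rewrite !inE !eqxx orbT.
  apply/and3P; split; apply: rainbowT; rewrite ?inE ?eqxx ?orbT //; apply: edgesD;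
    by rewrite !inE !negb_or ?(eq_sym y x) ?xy ?xz ?yz ?orbT.
- case/and3P=> xy_yz yz_xz xy_xz.
  apply/forall_inP => a aT; apply/forall_inP => b bT.
  apply/forall_inP => e eT; apply/forall_inP => f fT.
  move: aT bT eT fT; rewrite !inE -!orbA.
  by case/or3P=> /eqP->; case/or3P=> /eqP->; case/or3P=> /eqP->; case/or3P=> /eqP->;
    rewrite ?eqxx ?andbF //= ?(c_sym y x) ?(c_sym z y) ?(c_sym z x);
    apply/implyP => /and3P[_ _ edgesD];
    first [done | by rewrite eq_sym | by move: edgesD; rewrite setUC eqxx].
Qed.
End Rainbow.

Lemma rainbow_triangles_const (n : nat) (C : eqType) (k : C) :
  rainbow_triangles (fun _ _ : 'I_n => k) = set0.
Proof.
apply/setP => T; rewrite !inE; apply/negP => rainbowT.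
have [x [y [z [xy yz xz defT]]]] := cards3P (rainbow_card3 rainbowT).
by move: rainbowT; rewrite defT rainbow3E // /distinct3 eqxx.
Qed.

Lemma almost_gallai_sub (n : nat) (C D : eqType)
    (c : 'I_n -> 'I_n -> C) (c' : 'I_n -> 'I_n -> D) :
  rainbow_triangles c' \subset rainbow_triangles c ->
  almost_gallai c -> almost_gallai c'.
Proof.
move=> /subsetP sub_c'c /forall_inP gallai_c.
apply/forall_inP => T1 /sub_c'c T1c; apply/forall_inP => T2 /sub_c'c T2c.
exact: (forall_inP (gallai_c T1 T1c) T2 T2c).
Qed.

Section Recolouring.
Variables (n : nat) (C D : eqType) (c : 'I_n -> 'I_n -> C) (h : C -> D).
Hypothesis c_sym : sym_colouring c.

Lemma sym_colouring_comp : sym_colouring (fun x y => h (c x y)).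
Proof. by move=> x y; rewrite c_sym. Qed.

Lemma rainbow_triangles_comp_sub :
  rainbow_triangles (fun x y => h (c x y)) \subset rainbow_triangles c.
Proof.
apply/subsetP => T; rewrite !inE => rainbowT.
have [x [y [z [xy yz xz defT]]]] := cards3P (rainbow_card3 rainbowT).
rewrite defT (rainbow3E sym_colouring_comp xy yz xz) in rainbowT.
rewrite defT (rainbow3E c_sym xy yz xz); move: rainbowT.
have colourD u v : h u != h v -> u != v by apply: contraNneq => ->.
by case/and3P=> /colourD ? /colourD ? /colourD ?; apply/and3P.
Qed.

Lemma rainbow_triangles_comp :
  (forall x y x' y', h (c x y) = h (c x' y') -> c x y = c x' y') ->
  rainbow_triangles (fun x y => h (c x y)) = rainbow_triangles c.
Proof.
move=> h_inj; apply/eqP; rewrite eqEsubset rainbow_triangles_comp_sub.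
apply/subsetP => T; rewrite !inE => rainbowT.
have [x [y [z [xy yz xz defT]]]] := cards3P (rainbow_card3 rainbowT).
have inj_eq u v u' v' : (h (c u v) == h (c u' v')) = (c u v == c u' v').
  by apply/eqP/eqP => [/h_inj | ->].
rewrite defT (rainbow3E sym_colouring_comp xy yz xz).
by rewrite defT (rainbow3E c_sym xy yz xz) in rainbowT; rewrite /distinct3 /= !inj_eq.
Qed.

End Recolouring.

Lemma nat_bounded_has_max (P : nat -> Prop) (B : nat) :
  P 0 -> (forall k, P k -> k <= B) -> exists k, P k /\ forall j, P j -> j <= k.
Proof.
elim: B => [|B IH] P0 bounded.
  by exists 0; split=> // j /bounded; rewrite leqn0 => /eqP->.
have [PB1 | notPB1] := classic (P B.+1); first by exists B.+1.
apply: IH => // k Pk; rewrite -ltnS ltn_neqAle bounded // andbT.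
by apply/eqP => kB1; apply: notPB1; rewrite -kB1.
Qed.

Lemma exists_max_rainbow (C : eqType) (n : nat) (k0 : C) :
  exists k, is_max_rainbow C n k.
Proof.
pose achieved k := exists c : 'I_n -> 'I_n -> C,
  sym_colouring c /\ almost_gallai c /\ #|rainbow_triangles c| = k.
have achieved0 : achieved 0.
  exists (fun _ _ => k0); rewrite rainbow_triangles_const cards0.
  split; [by [] | split; last by []].
  by apply/forall_inP => T; rewrite rainbow_triangles_const inE.
have bounded k : achieved k -> k <= #|[set: {set 'I_n}]|.
  by move=> [c [_ [_ <-]]]; apply/subset_leq_card/subsetT.
have [k [[c maxc] k_max]] := nat_bounded_has_max achieved0 bounded.
by exists k; split; [exists c | move=> c' c'_sym c'_gallai; apply: k_max; exists c'].
Qed.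

Lemma is_max_rainbow_inj (C D : eqType) (h : C -> D) (n k k' : nat) :
  injective h -> is_max_rainbow C n k -> is_max_rainbow D n k' -> k <= k'.
Proof.
move=> h_inj [[c [c_sym [c_gallai <-]]] _] [_ max_k'].
rewrite -(rainbow_triangles_comp (h := h) c_sym) => [|x y x' y' /h_inj //].
apply: max_k'; first exact: sym_colouring_comp.
exact: almost_gallai_sub (rainbow_triangles_comp_sub h c_sym) c_gallai.
Qed.

Section UniformMarginal.
Variables (I K : finType) (a b d : I).
Hypotheses (ab : a != b) (bd : b != d) (ad : a != d).

Let key (phi : {ffun I -> K}) : K * K * K := (phi a, phi b, phi d).

Lemma card_key_fiber_le (t t' : K * K * K) :
  #|[set phi | key phi == t]| <= #|[set phi | key phi == t']|.
Proof.
case: t' => [[i j] k].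
pose reset (phi : {ffun I -> K}) :=
  [ffun x => if x == a then i else if x == b then j else if x == d then k else phi x].
have ba : (b == a) = false by rewrite eq_sym (negbTE ab).
have da : (d == a) = false by rewrite eq_sym (negbTE ad).
have db : (d == b) = false by rewrite eq_sym (negbTE bd).
rewrite -(card_in_imset (f := reset)).
  apply/subset_leq_card/subsetP => _ /imsetP[phi _ ->].
  by rewrite inE /key !ffunE !eqxx ba da db.
move=> phi psi; rewrite !inE => /eqP phi_t /eqP psi_t /ffunP reset_eq.
have [phia phib phid] : key phi = key psi by rewrite phi_t psi_t.
apply/ffunP => x; move: (reset_eq x); rewrite !ffunE.
by case: (x =P a) => [->|_]; last case: (x =P b) => [->|_]; last case: (x =P d) => [->|_].
Qed.

Lemma card_key_fiber (t t' : K * K * K) :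
  #|[set phi | key phi == t]| = #|[set phi | key phi == t']|.
Proof. by apply/eqP; rewrite eqn_leq !card_key_fiber_le. Qed.

Lemma card_key_preim (G : {pred K * K * K}) (t0 : K * K * K) :
  #|[set phi | key phi \in G]| = #|G| * #|[set phi | key phi == t0]|.
Proof.
rewrite -sum1dep_card (partition_big key (mem G)) //= -sum_nat_const.
apply: eq_bigr => t tG; rewrite (card_key_fiber _ t) -sum1dep_card.
by apply: eq_bigl => phi; case: eqP => [->|]; rewrite ?tG ?andbF.
Qed.

Lemma card_key_preim_ffun (G : {pred K * K * K}) :
  #|K| ^ 3 * #|[set phi | key phi \in G]| = #|G| * #|{ffun I -> K}|.
Proof.
case: (pickP K) => [k _|K0]; last first.
  have G0 : #|G| = 0.
    by apply/eqP; rewrite -leqn0 (leq_trans (max_card _)) // !card_prod (eq_card0 K0).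
  by rewrite (eq_card0 K0) G0.
have all_key : #|{ffun I -> K}| = #|K| ^ 3 * #|[set phi | key phi == (k, k, k)]|.
  have -> : #|{ffun I -> K}| = #|[set phi | key phi \in predT]|.
    by apply: eq_card => phi; rewrite !inE.
  by rewrite (card_key_preim predT (k, k, k)) !card_prod !expnSr expn0 mul1n.
by rewrite all_key (card_key_preim G (k, k, k)) mulnCA.
Qed.

End UniformMarginal.

Lemma card_distinct3 : #|[pred t : 'I_3 * 'I_3 * 'I_3 | distinct3 t]| = 6.
Proof.
rewrite -sum1_card big_mkcond -(pair_bigA _ (fun p k => if distinct3 (p, k) then 1 else 0)) /=.
rewrite -(pair_bigA _ (fun i j => \sum_(k < 3) if distinct3 (i, j, k) then 1 else 0)) /=.
by rewrite !big_ord_recl !big_ord0.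
Qed.

Lemma sum_mem_subset (T : finType) (A B : {set T}) :
  A \subset B -> \sum_(x in B) (x \in A) = #|A|.
Proof.
move=> /subsetP AB; rewrite -sum1_card big_mkcond [RHS]big_mkcond /=.
apply: eq_bigr => x _.
by case: (boolP (x \in A)) => [/AB->|]; case: (x \in B).
Qed.

Section Averaging.
Variables (n : nat) (K : finType) (c : 'I_n -> 'I_n -> K).
Hypothesis c_sym : sym_colouring c.

Lemma card_rainbow_recolourings (T : {set 'I_n}) : T \in rainbow_triangles c ->
  27 * #|[set phi : {ffun K -> 'I_3} | T \in rainbow_triangles (fun x y => phi (c x y))]|
  = 6 * #|{ffun K -> 'I_3}|.
Proof.
rewrite inE => rainbowT.
have [x [y [z [xy yz xz defT]]]] := cards3P (rainbow_card3 rainbowT).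
rewrite defT (rainbow3E c_sym xy yz xz) in rainbowT.
case/and3P: rainbowT => cxy_cyz cyz_cxz cxy_cxz.
have := card_key_preim_ffun cxy_cyz cyz_cxz cxy_cxz
  [pred t : 'I_3 * 'I_3 * 'I_3 | distinct3 t].
rewrite card_ord card_distinct3 => <-; congr (_ * _); apply: eq_card => phi.
by rewrite !inE defT (rainbow3E (sym_colouring_comp phi c_sym) xy yz xz).
Qed.

Lemma sum_card_rainbow_recolourings :
  27 * \sum_(phi : {ffun K -> 'I_3}) #|rainbow_triangles (fun x y => phi (c x y))|
  = 6 * #|{ffun K -> 'I_3}| * #|rainbow_triangles c|.
Proof.
under eq_bigr => phi _ do rewrite -(sum_mem_subset (rainbow_triangles_comp_sub phi c_sym)).
rewrite exchange_big big_distrr /= mulnC -sum_nat_const.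
apply: eq_bigr => T rainbowT; rewrite -(card_rainbow_recolourings rainbowT).
congr (_ * _); rewrite -sum1dep_card [X in _ = X]big_mkcond /=.
by apply: eq_bigr => phi _; case: (_ \in _).
Qed.

End Averaging.

Lemma nat_colouring_finite (n : nat) (c : 'I_n -> 'I_n -> nat) : sym_colouring c ->
  exists m (c' : 'I_n -> 'I_n -> 'I_m),
    sym_colouring c' /\ rainbow_triangles c' = rainbow_triangles c.
Proof.
move=> c_sym; pose m := \max_(p : 'I_n * 'I_n) c p.1 p.2.
have c_le_m x y : c x y < m.+1 by rewrite ltnS (leq_bigmax (x, y)).
exists m.+1, (fun x y => inord (c x y)); split; first exact: sym_colouring_comp.
apply: (rainbow_triangles_comp c_sym) => x y x' y' /(congr1 (@nat_of_ord _)).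
by rewrite !inordK.
Qed.

Lemma is_tau3_le_g (n t g : nat) : is_tau3 n t -> is_g n g -> 2 * t <= 9 * g.
Proof.
move=> [[c [c_sym [c_gallai <-]]] _] [_ max_g].
have [m [c' [c'_sym rt_c']]] := nat_colouring_finite c_sym.
have c'_gallai : almost_gallai c'.
  by apply: almost_gallai_sub c_gallai; rewrite rt_c'.
pose N := #|{ffun 'I_m -> 'I_3}|.
have N_gt0 : 0 < N by rewrite /N card_ffun card_ord expn_gt0.
have sum_le : \sum_(phi : {ffun 'I_m -> 'I_3}) #|rainbow_triangles (fun x y => phi (c' x y))|
    <= N * g.
  rewrite -sum_nat_const; apply: leq_sum => phi _; apply: max_g.
    exact: sym_colouring_comp.
  exact: almost_gallai_sub (rainbow_triangles_comp_sub phi c'_sym) c'_gallai.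
have := sum_card_rainbow_recolourings c'_sym; rewrite rt_c' -/N.
move=> count.
have : 6 * N * #|rainbow_triangles c| <= 27 * (N * g).
  by rewrite -count leq_mul2l sum_le orbT.
nia.
Qed.

Theorem lemma4p1 (n : nat) :
  exists t g : nat, [/\ is_tau3 n t, is_g n g, g <= t & 2 * t <= 9 * g].
Proof.
have [t tau3_t] := exists_max_rainbow n 0.
have [g g_g] := exists_max_rainbow n (ord0 : 'I_3).
exists t, g; split; [exact: tau3_t | exact: g_g | |].
  exact: is_max_rainbow_inj val_inj g_g tau3_t.
exact: is_tau3_le_g tau3_t g_g.
Qed.
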